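(* Let $p$ and $q$ be primes, $k\ge1$ and $E=\mathbb{Q}(\mu_{p^k})$. If $E$ has an efficient $\mu_{q^n}$-grading for some $n\ge1$, then $q^n=2$ or $p=q$. Moreover, if $p\neq2$, then $E$ has exactly one efficient $\mu_2$-grading and no efficient $\mu_{2p}$-grading.
   Context: $\mu_m\subseteq\mathbb{C}^*$ is the cyclic group of $m$-th roots of unity. For a group $\Gamma$, a $\Gamma$-grading of $E$ (as a $\mathbb{Q}$-algebra) is a family $\{E_\gamma\}_{\gamma\in\Gamma}$ of $\mathbb{Q}$-subspaces with $\bigoplus_\gamma E_\gamma=E$, $1\in E_1$ and $E_\gamma E_\delta\subseteq E_{\gamma\delta}$. It is efficient if $\Gamma$ is generated as a group by $\{\gamma: E_\gamma\ne0\}$. *)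

From HB Require Import structures.
From mathcomp Require Import all_boot all_order all_algebra all_fingroup all_field.
Set Implicit Arguments. Unset Strict Implicit. Unset Printing Implicit Defensive.
Import GRing.Theory.
Local Open Scope ring_scope.

Definition is_grading (gT : finGroupType) (L : fieldExtType rat)
    (V : {ffun gT -> {vspace L}}) : Prop :=
  [/\ (\sum_(g : gT) V g)%VS = fullv,
      directv (\sum_(g : gT) V g)%VS,
      1 \in V 1%g &
      forall (g h : gT) (x y : L), x \in V g -> y \in V h -> x * y \in V (g * h)%g].

Definition is_efficient_grading (gT : finGroupType) (L : fieldExtType rat)
    (V : {ffun gT -> {vspace L}}) : Prop :=
  is_grading V /\ <<[set g : gT | V g != 0%VS]>>%g = [set: gT].

(* The cyclic group mu_m of m-th roots of unity, for m >= 2, is modelled by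
   its isomorphic copy Z/mZ (written multiplicatively as a finGroupType,
   i.e. with group law addition mod m). *)
Definition mu (m : nat) : finGroupType := 'Z_m.

Definition has_efficient_mu_grading (L : fieldExtType rat) (m : nat) : Prop :=
  exists V : {ffun mu m -> {vspace L}}, is_efficient_grading V.

From HB Require Import structures.
From mathcomp Require Import all_boot all_order all_algebra all_fingroup all_field.
From mathcomp Require Import zify cyclic.
Import GRing.Theory Num.Theory.
Local Open Scope ring_scope.
Set Implicit Arguments.
Unset Strict Implicit.

(* All components of an efficient mu_m-grading of a field L are nonzero; the
   degree-0 part is a subfield K, and any nonzero x of degree 1 satisfies
   L = K(x), [L : K] = m and x^m \in K.  When L is Galois over Q, as
   Q(mu_(p^k)) is, g |-> g(x)/x maps Gal(L/K) injectively into the m-th roots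
   of unity, so by counting every m-th root of unity is such a ratio and L
   contains a primitive one.  For q <> p this forces
   phi(q^n) phi(p^k) <= [L : Q] = phi(p^k), i.e. q^n = 2.
   For odd p the only involution in Gal(L/Q) = (Z/p^k)^* is complex conjugation
   s : z |-> z^-1.  For even m some automorphism of L/K sends x to -x; it is an
   involution, hence equals s.  So a mu_2-grading is the decomposition of L into
   the eigenspaces of s, and a mu_(2p)-grading would make s, which commutes with
   Gal(L/K), fix a primitive 2p-th root of unity g(x)/x, whose square would then
   be a p-th root of unity other than 1 fixed by s. *)

Lemma rmorph_factor (R A B : comNzRingType) (phi : {rmorphism R -> A})
    (psi : {rmorphism R -> B}) (s : A -> R) :
    cancel s phi -> (forall r, phi r = 0 -> psi r = 0) ->
  {f : {rmorphism A -> B} | forall r, f (phi r) = psi r}.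
Proof.
move=> sK ker_psi.
have psi_s r : psi (s (phi r)) = psi r.
  by apply/eqP; rewrite -subr_eq0 -rmorphB ker_psi // rmorphB sK subrr.
have fB : zmod_morphism (psi \o s).
  by move=> a b /=; rewrite -{1}(sK a) -{1}(sK b) -rmorphB psi_s rmorphB.
have fM : monoid_morphism (psi \o s).
  split=> [|a b] /=; first by rewrite -(rmorph1 phi) psi_s rmorph1.
  by rewrite -{1}(sK a) -{1}(sK b) -rmorphM psi_s rmorphM.
pose fRM : {rmorphism A -> B} := HB.pack (psi \o s)
  (GRing.isZmodMorphism.Build _ _ _ fB) (GRing.isMonoidMorphism.Build _ _ _ fM).
by exists fRM => r /=; rewrite psi_s.
Qed.

(* Irreducibility of cyclotomic polynomials over Q is only available inside
   algC, so degrees over Q are computed through an embedding into algC. *)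
Section RatExtension.
Variable L : fieldExtType rat.
Local Notation pL r := (map_poly (in_alg L) r).
Local Notation pC r := (map_poly (ratr : rat -> algC) r).

Lemma polyOver1_rat (r : {poly L}) : r \is a polyOver 1%VS ->
  r = pL (map_poly (coord [tuple 1] 0) r).
Proof.
move=> r1; rewrite -map_poly_comp map_poly_id // => _ /(allP r1)/vlineP[a ->] /=.
by rewrite linearZ /= (coord_free 0) ?mulr1 // seq1_free ?oner_eq0.
Qed.

Lemma minPoly1_rat (y : L) : {m : {poly rat} | minPoly 1 y = pL m}.
Proof. by eexists; apply/polyOver1_rat/minPolyOver. Qed.

Lemma rat_ext_algC_embedding (z : L) : <<1; z>>%VS = fullv -> {rmorphism L -> algC}.
Proof.
move=> genL; have [m Dm] := minPoly1_rat z.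
have m_neq1 : size (pC m) != 1%N.
  by rewrite size_map_poly -(size_map_poly (in_alg L)) -Dm size_minPoly.
have [u u_root] := sig_eqW (closed_rootP _ m_neq1).
have cLz : commr_rmorph (in_alg L) z by move=> a; apply: mulrC.
have cCu : commr_rmorph (ratr : {rmorphism rat -> algC}) u by move=> a; apply: mulrC.
pose s v := map_poly (coord [tuple 1] 0) (Fadjoin_poly 1 z v).
have sK : cancel s (horner_morph cLz).
  move=> v; rewrite /horner_morph -polyOver1_rat ?Fadjoin_polyOver //.
  by rewrite Fadjoin_poly_eq // genL memvf.
have ker r : horner_morph cLz r = 0 -> horner_morph cCu r = 0.
  move=> /rootP rz; have /dvdpP[c ->] : m %| r.
    by rewrite -(dvdp_map (in_alg L)) -Dm; apply: minPoly_dvdp => //; apply: alg_polyOver.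
  by rewrite rmorphM /= [X in _ * X]/horner_morph (rootP u_root) mulr0.
by have [f _] := rmorph_factor sK ker; exact: f.
Qed.

Variable f : {rmorphism L -> algC}.

Lemma horner_algC_embedding (r : {poly rat}) (y : L) : f (pL r).[y] = (pC r).[f y].
Proof.
rewrite -horner_map /= -map_poly_comp; congr (_.[_]).
by apply: eq_map_poly => a /=; rewrite rmorphZ_num rmorph1 mulr1.
Qed.

Lemma minCpoly_dvdp_minPoly1 (y : L) m : minPoly 1 y = pL m -> minCpoly (f y) %| pC m.
Proof.
move=> Dm; have [c [Dc _] dv_c] := minCpolyP (f y).
rewrite Dc dvdp_map -dv_c; apply/rootP.
by rewrite -horner_algC_embedding -Dm minPolyxx rmorph0.
Qed.

Lemma adjoin_degree_primitive_root n (y : L) :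
  n.-primitive_root y -> adjoin_degree 1 y = totient n.
Proof.
move=> prim_y; have prim_fy : n.-primitive_root (f y) by rewrite fmorph_primitive_root.
have [m Dm] := minPoly1_rat y; have [c [Dc _] _] := minCpolyP (f y).
have size_c : size c = (totient n).+1.
  rewrite -(size_map_poly (ratr : {rmorphism rat -> algC})) -Dc.
  by rewrite (minCpoly_cyclotomic prim_fy) size_cyclotomic.
have size_m : size m = (adjoin_degree 1 y).+1.
  by rewrite -(size_map_poly (in_alg L)) -Dm size_minPoly.
suff : size m = size c by rewrite size_m size_c => -[].
apply/eqP; rewrite eqn_leq; apply/andP; split; apply: dvdp_leq.
- by rewrite -size_poly_eq0 size_c.
- rewrite -(dvdp_map (in_alg L)) -Dm; apply: minPoly_dvdp; first exact: alg_polyOver.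
  apply/rootP/(fmorph_inj f); rewrite horner_algC_embedding -Dc rmorph0.
  exact/rootP/root_minCpoly.
- by rewrite -size_poly_eq0 size_m.
- by rewrite -(dvdp_map (ratr : {rmorphism rat -> algC})) -Dc minCpoly_dvdp_minPoly1.
Qed.

Lemma root_minPoly1_coprime_exp n (y : L) j :
  n.-primitive_root y -> coprime j n -> root (minPoly 1 y) (y ^+ j).
Proof.
move=> prim_y co_jn; have prim_fy : n.-primitive_root (f y) by rewrite fmorph_primitive_root.
have [m Dm] := minPoly1_rat y.
have := minCpoly_dvdp_minPoly1 Dm; rewrite (minCpoly_cyclotomic prim_fy) => /dvdpP[r Dr].
rewrite Dm; apply/rootP/(fmorph_inj f).
rewrite horner_algC_embedding rmorph0 rmorphXn Dr hornerM.
have /rootP-> : root (cyclotomic (f y) n) (f y ^+ j).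
  by rewrite root_cyclotomic // prim_root_exp_coprime.
by rewrite mulr0.
Qed.

End RatExtension.

Lemma sqr_eq1_mod_odd_prime_power p k e : prime p -> odd p ->
  (e * e == 1 %[mod p ^ k])%N -> (e == 1 %[mod p ^ k])%N || (e.+1 == 0 %[mod p ^ k])%N.
Proof.
move=> p_pr p_odd; case: e => [|e].
  by rewrite mod0n eq_sym -/(dvdn _ _) dvdn1 => /eqP->.
rewrite !eqn_mod_dvd // subSS !subn0 (_ : e.+1 * e.+1 - 1 = e * e.+2)%N; last by lia.
have p_gt2 : (2 < p)%N by have := prime_gt1 p_pr; case: p p_odd {p_pr} => [|[|[]]].
have [p_e2 | p'e2] := boolP (p %| e.+2)%N.
  have p'e : ~~ (p %| e)%N.
    apply: contraTN p_gt2 => p_e; rewrite -leqNgt; apply: dvdn_leq => //.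
    by rewrite -(addKn e 2%N) addnC dvdn_sub.
  by rewrite Gauss_dvdr ?coprimeXl ?prime_coprime // => ->; rewrite orbT.
by rewrite mulnC Gauss_dvdr ?coprimeXl ?prime_coprime // => ->.
Qed.

Lemma totient_prime_power_le1 q n : prime q -> (0 < n)%N ->
  (totient (q ^ n) <= 1)%N -> (q ^ n = 2)%N.
Proof.
move=> q_pr n_gt0; rewrite totient_pfactor //.
have := prime_gt1 q_pr; have : (0 < q ^ n.-1)%N by rewrite expn_gt0 prime_gt0.
rewrite -(prednK n_gt0) expnS /=; move: (q ^ n.-1)%N => r; nia.
Qed.

Lemma prim_rootM (F : fieldType) r s (a b : F) : coprime r s ->
  r.-primitive_root a -> s.-primitive_root b -> (r * s)%N.-primitive_root (a * b).
Proof.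
move=> co_rs prim_a prim_b.
have rs_gt0 : (0 < r * s)%N.
  by rewrite muln_gt0 (prim_order_gt0 prim_a) (prim_order_gt0 prim_b).
have ab_rs : (a * b) ^+ (r * s) = 1.
  rewrite exprMn {1}exprM (prim_expr_order prim_a) expr1n mul1r.
  by rewrite mulnC exprM (prim_expr_order prim_b) expr1n.
have [d prim_ab d_rs] := prim_order_exists rs_gt0 ab_rs.
have dvd_d u v (c e : F) : coprime u v -> u.-primitive_root c -> v.-primitive_root e ->
    (c * e) ^+ d = 1 -> (u %| d)%N.
  move=> co_uv prim_c prim_e ce_d.
  have e_dv : e ^+ (d * v) = 1 by rewrite mulnC exprM (prim_expr_order prim_e) expr1n.
  rewrite -(Gauss_dvdl d co_uv) (prim_order_dvd prim_c) -[c ^+ _]mulr1 -{1}e_dv.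
  by rewrite -exprMn exprM ce_d expr1n.
suff /eqP-> : (r * s == d)%N by [].
have ab_d := prim_expr_order prim_ab.
rewrite eqn_dvd d_rs Gauss_dvd // (dvd_d r s a b) // (dvd_d s r b a) 1?mulrC //.
by rewrite coprime_sym.
Qed.

Section Gradings.
Variables (gT : finGroupType) (L : fieldExtType rat).
Implicit Type V W : {ffun gT -> {vspace L}}.

Lemma grading_dim V : is_grading V -> \dim {:L} = (\sum_g \dim (V g))%N.
Proof. by case=> sumV /directvP/= dimV _ _; rewrite -sumV dimV. Qed.

Lemma grading_eq V W : is_grading V -> is_grading W ->
  (forall g, (V g <= W g)%VS) -> V = W.
Proof.
move=> gradV gradW sVW.
have [_] : (\sum_g \dim (V g) <= \sum_g \dim (W g) ?= iff
            [forall g, \dim (V g) == \dim (W g)])%N.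
  by apply: leqif_sum => g _; apply/leqif_eq/dimvS.
rewrite -grading_dim // -grading_dim // eqxx => /esym/forallP eq_dim.
by apply/ffunP => g; apply/eqP; rewrite eqEdim sVW (eqP (eq_dim g)) leqnn.
Qed.

Lemma efficient_grading_neq0 V : is_efficient_grading V -> forall g, V g != 0%VS.
Proof.
case=> -[_ _ V1_1 VM] genV g.
suff supp_group : group_set [set g | V g != 0%VS].
  by have := in_setT g; rewrite -genV (gen_set_id supp_group) inE.
apply/andP; split.
  by rewrite inE; apply: contraTneq V1_1 => ->; rewrite memv0 oner_eq0.
apply/subsetP => _ /mulsgP[a b Va Vb ->]; rewrite !inE -!vpick0 in Va Vb; rewrite inE.
apply: contraNneq (mulf_neq0 Va Vb) => Vab0.
by have := VM _ _ _ _ (memv_pick (V a)) (memv_pick (V b)); rewrite Vab0 memv0.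
Qed.

End Gradings.

Section CyclicGrading.
Variables (L : fieldExtType rat) (m : nat) (V : {ffun 'Z_m -> {vspace L}}).
Hypotheses (m_gt1 : (1 < m)%N) (gradV : is_efficient_grading V).

Lemma mem_grading_1 : 1 \in V 0. Proof. by case: gradV => -[]. Qed.

Lemma mem_gradingM g h a b : a \in V g -> b \in V h -> a * b \in V (g + h).
Proof. by case: gradV => -[_ _ _ VM] _; apply: VM. Qed.

Definition grading_gen : L := vpick (V 1).
Local Notation x := grading_gen.

Lemma grading_gen_neq0 : x != 0.
Proof. by rewrite vpick0 efficient_grading_neq0. Qed.

Lemma mem_grading_genX j : x ^+ j \in V j%:R.
Proof.
elim: j => [|j IHj]; first by rewrite expr0 mem_grading_1.
by rewrite exprSr -[j.+1]addn1 natrD; apply: mem_gradingM IHj (memv_pick _).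
Qed.

Lemma mem_grading_gen_order : x ^+ m \in V 0.
Proof. by have := mem_grading_genX m; rewrite pchar_Zp. Qed.

Lemma grading0_aspace : is_aspace (V 0).
Proof.
rewrite /is_aspace has_algid1 ?mem_grading_1 //; apply/prodvP => a b Va Vb.
by have := mem_gradingM Va Vb; rewrite addr0.
Qed.

Definition grading_field : {subfield L} := ASpace grading0_aspace.
Local Notation K := grading_field.

Lemma grading_shift g y : y \in V g -> y * x ^+ (m - g) \in K.
Proof.
move=> Vy; have := mem_gradingM Vy (mem_grading_genX (m - g)).
rewrite -[g in g + _]natr_Zp -natrD subnKC ?pchar_Zp //.
by have := ltn_ord g; rewrite [X in (_ < X)%N -> _]Zp_cast // => /ltnW.
Qed.

Lemma dim_grading g : \dim (V g) = \dim K.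
Proof.
have x_neq0 n : x ^+ n != 0 by rewrite expf_neq0 ?grading_gen_neq0.
apply/eqP; rewrite eqn_leq; apply/andP; split.
  rewrite -(dim_cosetv (V g) (x_neq0 (m - g)%N)); apply: dimvS.
  by apply/prodvP => a _ Va /vlineP[c ->]; rewrite -scalerAr rpredZ ?grading_shift.
rewrite -(dim_cosetv K (x_neq0 g)); apply: dimvS.
apply/prodvP => a _ Ka /vlineP[c ->]; rewrite -scalerAr rpredZ //.
by have := mem_gradingM Ka (mem_grading_genX g); rewrite add0r natr_Zp.
Qed.

Lemma dim_grading_field : \dim_K {:L} = m.
Proof.
case: gradV => gradV' _; rewrite (grading_dim gradV').
rewrite (eq_bigr _ (fun g _ => dim_grading g)) sum_nat_const card_ord Zp_cast //.
by rewrite mulnK ?adim_gt0.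
Qed.

Lemma adjoin_grading_gen : <<K; x>>%VS = fullv.
Proof.
apply/eqP; rewrite eqEsubv subvf /=; case: gradV => -[<- _ _ _] _.
apply/subv_sumP => g _; apply/subvP => y Vy.
have x_neq0 : x ^+ (m - g) != 0 by rewrite expf_neq0 ?grading_gen_neq0.
rewrite -[y](mulfK x_neq0); apply: memvM.
  exact/(subvP (subv_adjoin K x))/grading_shift.
by rewrite memvV rpredX ?memv_adjoin.
Qed.

Lemma grading1_div_gen y : y \in V 1 -> y / x \in K.
Proof.
move=> Vy; have x_neq0 := grading_gen_neq0.
have -> : y / x = (y * x ^+ (m - 1)) / x ^+ m.
  by rewrite -{2}(subnK (ltnW m_gt1)) exprD invfM mulrA mulfK ?expf_neq0.
have := grading_shift Vy; rewrite [val _]/= modn_small // => Ky.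
by rewrite memvM // memvV; apply: mem_grading_gen_order.
Qed.

End CyclicGrading.

Section GaloisGrading.
Variable L : splittingFieldType rat.

Lemma galois_rat (K : {subfield L}) : galois K fullv.
Proof.
rewrite /galois subvf normalFieldf andbT; apply/separableP => y _.
by apply: pcharf0_separable => n; rewrite pchar_lalg pchar_num.
Qed.

Lemma mem_gal1 (g : gal_of {:L}) : g \in ('Gal({:L} / 1%VS))%g.
Proof.
rewrite gal_kHom ?sub1v //; apply/kAHomP => _ /vlineP[a ->].
by rewrite linearZ /= rmorph1.
Qed.

(* Rewriting with the generic [rmorph*] lemmas produces a different coercion of
   [g] to a function, on which later rewrites fail; these restatements avoid it. *)
Section GalMorph.
Variable g : gal_of {:L}.
Lemma gal_morphN a : g (- a) = - g a. Proof. exact: rmorphN. Qed.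
Lemma gal_morphD a b : g (a + b) = g a + g b. Proof. exact: rmorphD. Qed.
Lemma gal_morphB a b : g (a - b) = g a - g b. Proof. exact: rmorphB. Qed.
Lemma gal_morphM a b : g (a * b) = g a * g b. Proof. exact: rmorphM. Qed.
Lemma gal_morphV a : g a^-1 = (g a)^-1. Proof. exact: fmorphV. Qed.
Lemma gal_morphX a n : g (a ^+ n) = g a ^+ n. Proof. exact: rmorphXn. Qed.
End GalMorph.

Lemma gal_eq_adjoin (K : {subfield L}) (x : L) (g h : gal_of {:L}) :
    <<K; x>>%VS = fullv -> g \in ('Gal({:L} / K))%g -> h \in ('Gal({:L} / K))%g ->
  g x = h x -> g = h.
Proof.
move=> genL galKg galKh gx_hx; apply/eqP/gal_eqP => y _.
have /Fadjoin_polyP[r Kr ->] : y \in <<K; x>>%VS by rewrite genL memvf.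
by rewrite -!horner_map /= !(fixedPoly_gal (subvf K)) // gx_hx.
Qed.

Variables (m : nat) (V : {ffun 'Z_m -> {vspace L}}).
Hypotheses (m_gt1 : (1 < m)%N) (gradV : is_efficient_grading V).
Local Notation K := (grading_field gradV).
Local Notation x := (grading_gen V).
Local Notation G := (('Gal({:L} / K))%g).

Definition gal_grading_ratios : seq L := [seq (g : gal_of {:L}) x / x | g <- enum G].
Local Notation rs := gal_grading_ratios.

Lemma size_gal_grading_ratios : size rs = m.
Proof.
by rewrite size_map -cardE -galois_dim ?galois_rat // dim_grading_field.
Qed.

Lemma uniq_gal_grading_ratios : uniq rs.
Proof.
rewrite map_inj_in_uniq ?enum_uniq // => g h; rewrite !mem_enum => galKg galKh.
move/(mulIf (invr_neq0 (grading_gen_neq0 gradV))).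
exact: gal_eq_adjoin (adjoin_grading_gen m_gt1 gradV) galKg galKh.
Qed.

Lemma gal_grading_ratios_unity : all m.-unity_root rs.
Proof.
apply/allP => _ /mapP[g galKg ->]; rewrite mem_enum in galKg.
have := fixed_gal (subvf K) galKg (mem_grading_gen_order m_gt1 gradV).
rewrite gal_morphX unity_rootE exprMn exprVn => ->.
by rewrite divff // expf_neq0 ?grading_gen_neq0.
Qed.

Lemma grading_prim_root_exists : exists w : L, m.-primitive_root w.
Proof.
have /hasP[w _ prim_w] : has m.-primitive_root rs.
  apply: has_prim_root (ltnW m_gt1) gal_grading_ratios_unity _ _.
    exact: uniq_gal_grading_ratios.
  by rewrite size_gal_grading_ratios.
by exists w.
Qed.

Lemma gal_grading_ratio_onto (c : L) :
  m.-unity_root c -> exists2 g : gal_of {:L}, g \in G & g x = c * x.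
Proof.
move=> unity_c; suff /mapP[g galKg ->] : c \in rs.
  exists g; first by rewrite mem_enum in galKg.
  by rewrite divfK // grading_gen_neq0.
apply: contraT => rs'c.
have := @max_unity_roots _ m (c :: rs) (ltnW m_gt1).
rewrite /= unity_c gal_grading_ratios_unity rs'c uniq_gal_grading_ratios.
by rewrite size_gal_grading_ratios ltnn => /(_ isT isT).
Qed.

Lemma gal_grading_neg_involution (h : gal_of {:L}) :
  h \in G -> h x = - x -> (h * h)%g = 1%g /\ h != 1%g.
Proof.
move=> galKh hx; have x_neq0 := grading_gen_neq0 gradV; split.
  apply: gal_eq_adjoin (adjoin_grading_gen m_gt1 gradV) _ _ _ => //.
    by rewrite groupM.
  by rewrite galM ?memvf // hx gal_morphN hx opprK gal_id.
apply/eqP => h1; move: hx; rewrite h1 gal_id => /eqP.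
by rewrite -subr_eq0 opprK -mulr2n -scaler_nat scaler_eq0 (negPf x_neq0).
Qed.

End GaloisGrading.

Lemma Zp2P (i : 'Z_2) : i = 0 \/ i = 1.
Proof. by case: i => -[|[|//]] ?; [left | right]; apply: val_inj. Qed.

Lemma big_Zp2 (R : Type) (idx : R) (op : Monoid.law idx) (F : 'Z_2 -> R) :
  \big[op/idx]_(i : 'Z_2) F i = op (F 0) (F 1).
Proof.
by rewrite [LHS](big_ord_recl 1) big_ord1; congr (op (F _) (F _)); apply: val_inj.
Qed.

Section InvolutionGrading.
Variables (L : splittingFieldType rat) (s : gal_of {:L}).

Definition gal_eigen_grading : {ffun 'Z_2 -> {vspace L}} :=
  [ffun i : 'Z_2 => lker ((s : 'End(L)) - (-1) ^+ i *: \1)%VF].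
Local Notation E := gal_eigen_grading.

Lemma mem_gal_eigen_grading i v : (v \in E i) = (s v == (-1) ^+ i *: v).
Proof. by rewrite ffunE memv_ker add_lfunE opp_lfunE scale_lfunE id_lfunE subr_eq0. Qed.

Hypotheses (ss1 : (s * s)%g = 1%g) (s_neq1 : s != 1%g).

Lemma gal_eigen_grading_efficient : is_efficient_grading E.
Proof.
have ssv v : s (s v) = v by rewrite -galM ?memvf // ss1 gal_id.
have E0 v : v + s v \in E 0.
  by rewrite mem_gal_eigen_grading gal_morphD ssv addrC scale1r.
have E1 v : v - s v \in E 1.
  by rewrite mem_gal_eigen_grading gal_morphB ssv expr1 scaleN1r opprB.
have one_E0 : 1 \in E 0 by rewrite mem_gal_eigen_grading rmorph1 scale1r.
split; first split.
- apply/eqP; rewrite eqEsubv subvf big_Zp2; apply/subvP => v _.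
  have -> : v = 2%:R^-1 *: (v + s v) + 2%:R^-1 *: (v - s v) :> L.
    rewrite -scalerDr addrACA subrr addr0 -mulr2n -scaler_nat scalerA.
    by rewrite mulVf ?scale1r.
  by rewrite memv_add ?memvZ.
- rewrite directvE /= !big_Zp2 dimv_disjoint_sum //.
  apply/eqP; rewrite -subv0; apply/subvP => v.
  rewrite memv_cap !mem_gal_eigen_grading memv0 => /andP[/eqP-> /eqP].
  rewrite expr0 expr1 scale1r scaleN1r => /eqP.
  by rewrite -subr_eq0 opprK -mulr2n -scaler_nat scaler_eq0.
- exact: one_E0.
- move=> i j a b; rewrite !mem_gal_eigen_grading => /eqP sa /eqP sb.
  by rewrite gal_morphM sa sb -scalerAl -scalerAr scalerA -exprD /= modn2 signr_odd.
- suff -> : [set i : 'Z_2 | E i != 0%VS] = setT by rewrite gen_set_id ?group_setT.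
  apply/setP => i; rewrite !inE; case: (Zp2P i) => ->.
    by apply: contraTneq one_E0 => ->; rewrite memv0 oner_eq0.
  apply: contra s_neq1 => /eqP E1_0; apply/gal_eqP => v _.
  by apply/eqP; rewrite gal_id eq_sym -subr_eq0 -memv0 -E1_0 E1.
Qed.

End InvolutionGrading.

Lemma efficient_Zp2_grading_eigen (L : splittingFieldType rat)
    (W : {ffun 'Z_2 -> {vspace L}}) : is_efficient_grading W ->
  exists t : gal_of {:L},
    [/\ (t * t)%g = 1%g, t != 1%g & W = gal_eigen_grading t].
Proof.
move=> gradW; have two_gt1 : (1 < 2)%N by [].
have unity_N1 : 2.-unity_root (-1 : L) by rewrite unity_rootE sqrrN expr1n.
have [t galKt] := gal_grading_ratio_onto two_gt1 gradW unity_N1.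
rewrite mulN1r => tx; have [tt1 t_neq1] := gal_grading_neg_involution two_gt1 galKt tx.
exists t; split => //.
have [[gradE _] [gradW' _]] := (gal_eigen_grading_efficient tt1 t_neq1, gradW).
apply: grading_eq gradW' gradE _ => i; apply/subvP => y Wy.
rewrite mem_gal_eigen_grading; case: (Zp2P i) Wy => -> Wy.
  by rewrite scale1r (fixed_gal (subvf _) galKt Wy).
have Ky := grading1_div_gen two_gt1 gradW Wy.
rewrite -[y in t y](divfK (grading_gen_neq0 gradW)) gal_morphM.
rewrite (fixed_gal (subvf _) galKt Ky).
by rewrite tx mulrN divfK ?grading_gen_neq0 // expr1 scaleN1r.
Qed.

Section CyclotomicField.
Variables (L : splittingFieldType rat) (p k : nat) (z : L).
Hypotheses (p_pr : prime p) (k_gt0 : (0 < k)%N).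
Hypotheses (prim_z : (p ^ k)%N.-primitive_root z) (genL : <<1; z>>%VS = fullv).
Local Notation N := (p ^ k)%N.

Lemma cyclotomic_order_gt1 : (1 < N)%N.
Proof. by rewrite -(expn0 p) ltn_exp2l ?prime_gt1. Qed.

Lemma cyclotomic_gen_neq0 : z != 0.
Proof. by rewrite (prim_root_eq0 prim_z) -lt0n ltnW ?cyclotomic_order_gt1. Qed.

Let f := rat_ext_algC_embedding genL.

Lemma dim_cyclotomic : \dim {:L} = totient N.
Proof.
by rewrite -genL -(adjoin_degree_primitive_root f prim_z) adjoin_degreeE dimv1 divn1.
Qed.

Lemma totient_le_cyclotomic n (y : L) : n.-primitive_root y -> (totient n <= totient N)%N.
Proof.
move=> prim_y; rewrite -dim_cyclotomic -(adjoin_degree_primitive_root f prim_y).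
by rewrite adjoin_degreeE dimv1 divn1 dimvS ?subvf.
Qed.

Lemma mu_grading_cyclotomic q n : prime q -> (0 < n)%N -> q != p ->
  has_efficient_mu_grading L (q ^ n) -> (q ^ n = 2)%N.
Proof.
move=> q_pr n_gt0 q_neq_p [V gradV].
have qn_gt1 : (1 < q ^ n)%N by rewrite -(expn0 q) ltn_exp2l ?prime_gt1.
have [w prim_w] := grading_prim_root_exists qn_gt1 gradV.
have co_qnN : coprime (q ^ n) N.
  by rewrite coprime_pexpl // coprime_pexpr // prime_coprime // dvdn_prime2.
have := totient_le_cyclotomic (prim_rootM co_qnN prim_w prim_z).
rewrite totient_coprime // -{2}[totient N]mul1n.
rewrite leq_pmul2r ?totient_gt0 ?expn_gt0 ?prime_gt0 //.
exact: totient_prime_power_le1.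
Qed.

Lemma gal_cyclotomic_inj (g h : gal_of {:L}) : g z = h z -> g = h.
Proof. exact: gal_eq_adjoin genL (mem_gal1 g) (mem_gal1 h). Qed.

Lemma gal_cyclotomic_exp (g : gal_of {:L}) : exists e, g z = z ^+ e.
Proof.
have /(prim_rootP prim_z)[e ->] : (g z) ^+ N = 1.
  by rewrite -gal_morphX (prim_expr_order prim_z) rmorph1.
by exists e.
Qed.

Lemma gal_cyclotomic_comm (g h : gal_of {:L}) : (g * h)%g = (h * g)%g.
Proof.
apply: gal_cyclotomic_inj; rewrite !galM ?memvf //.
have [[e ge] [e' he]] := (gal_cyclotomic_exp g, gal_cyclotomic_exp h).
by rewrite ge he !gal_morphX ge he -!exprM mulnC.
Qed.

Lemma cyclotomic_conj_exists : exists s : gal_of {:L}, s z = z^-1.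
Proof.
have N_gt0 := ltnW cyclotomic_order_gt1.
have z_inv : z^-1 = z ^+ N.-1.
  apply: (mulIf cyclotomic_gen_neq0).
  by rewrite mulVf ?cyclotomic_gen_neq0 // -exprSr prednK // prim_expr_order.
have := root_minPoly1_coprime_exp f prim_z (coprimePn N_gt0); rewrite -z_inv.
case/(normalField_root_minPoly (sub1v _) (normalFieldf 1) (memvf z)) => s _ sz.
by exists s.
Qed.

Section Conjugation.
Variable s : gal_of {:L}.
Hypothesis sz : s z = z^-1.

Lemma cyclotomic_conj_unity c : c ^+ N = 1 -> s c = c^-1.
Proof. by case/(prim_rootP prim_z) => i ->; rewrite gal_morphX sz exprVn. Qed.

Lemma cyclotomic_conj_involution : (s * s)%g = 1%g.
Proof.
apply: gal_cyclotomic_inj; rewrite galM ?memvf // sz cyclotomic_conj_unity ?invrK ?gal_id //.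
by rewrite exprVn prim_expr_order ?invr1.
Qed.

Hypothesis p_odd : odd p.

Lemma cyclotomic_order_gt2 : (2 < N)%N.
Proof.
apply: (@leq_trans p).
  by rewrite ltn_neqAle prime_gt1 // andbT; apply: contraTneq p_odd => <-.
by rewrite -{1}(expn1 p) leq_pexp2l // prime_gt0.
Qed.

Lemma cyclotomic_conj_neq1 : s != 1%g.
Proof.
apply/eqP => s1; move: sz; rewrite s1 gal_id => zz.
have /eqP : z ^+ 2 = 1 by rewrite expr2 {1}zz mulVf ?cyclotomic_gen_neq0.
rewrite -(prim_order_dvd prim_z) => /dvdn_leq.
by move/(_ isT); rewrite leqNgt cyclotomic_order_gt2.
Qed.

Lemma cyclotomic_involution t : (t * t)%g = 1%g -> t = 1%g \/ t = s.
Proof.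
move=> tt1; have [e te] := gal_cyclotomic_exp t.
have /eqP : z ^+ (e * e) = z ^+ 1.
  by rewrite exprM -te -gal_morphX -te -galM ?memvf // tt1 gal_id expr1.
rewrite (eq_prim_root_expr prim_z) => /(sqr_eq1_mod_odd_prime_power p_pr p_odd).
case/orP => e_mod; [left | right]; apply: gal_cyclotomic_inj; rewrite te.
  by rewrite gal_id -{2}(expr1 z); apply/eqP; rewrite (eq_prim_root_expr prim_z).
rewrite sz; apply: (mulIf cyclotomic_gen_neq0); rewrite mulVf ?cyclotomic_gen_neq0 //.
rewrite -exprSr -(expr0 z); apply/eqP; rewrite (eq_prim_root_expr prim_z).
by [].
Qed.

Lemma cyclotomic_conj_fixed_unity_p c : c ^+ p = 1 -> s c = c -> c = 1.
Proof.
move=> cp1 sc.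
have cN : c ^+ N = 1 by rewrite -(prednK k_gt0) expnS exprM cp1 expr1n.
have c_neq0 : c != 0.
  by apply: contra_eq_neq cp1 => ->; rewrite expr0n gtn_eqF ?prime_gt0 // eq_sym oner_eq0.
have c2 : c ^+ 2 = 1 by rewrite expr2 -{1}sc cyclotomic_conj_unity // mulVf.
by rewrite -cp1 -(odd_double_half p) p_odd exprD -mul2n exprM c2 expr1n mulr1.
Qed.

Lemma no_mu2p_grading_cyclotomic : ~ has_efficient_mu_grading L (2 * p).
Proof.
move=> [V gradV]; set x := grading_gen V.
have m_gt1 : (1 < 2 * p)%N by rewrite (@leq_trans 2) // leq_pmulr ?prime_gt0.
have x_neq0 : x != 0 := grading_gen_neq0 gradV.
have unity_N1 : (2 * p).-unity_root (-1 : L) by rewrite unity_rootE exprM sqrrN !expr1n.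
have [h galKh] := gal_grading_ratio_onto m_gt1 gradV unity_N1.
rewrite mulN1r => hx; have [hh1 h_neq1] := gal_grading_neg_involution m_gt1 galKh hx.
have h_s : h = s by case: (cyclotomic_involution hh1) => // h1; rewrite h1 eqxx in h_neq1.
have [w prim_w] := grading_prim_root_exists m_gt1 gradV.
have unity_w : (2 * p).-unity_root w by rewrite unity_rootE prim_expr_order.
have [g _ gx] := gal_grading_ratio_onto m_gt1 gradV unity_w.
have sgx : s (g x) = - g x.
  by rewrite -galM ?memvf // gal_cyclotomic_comm galM ?memvf // -h_s hx gal_morphN.
have sw : s w = w.
  by rewrite -(mulfK x_neq0 w) -gx gal_morphM gal_morphV sgx -h_s hx invrN mulrNN.
have /eqP : w ^+ 2 = 1.
  by apply: cyclotomic_conj_fixed_unity_p; rewrite ?gal_morphX ?sw // -exprM prim_expr_order.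
rewrite -(prim_order_dvd prim_w) => /dvdn_leq.
by have := prime_gt1 p_pr; lia.
Qed.

End Conjugation.

End CyclotomicField.

Lemma cyclotomic_splitting_field_axiom (L : fieldExtType rat) n (z : L) :
  n.-primitive_root z -> <<1; z>>%VS = fullv -> splitting_field_axiom L.
Proof.
move=> prim_z genL; exists ('X^n - 1); first by rewrite rpredB ?rpredX ?polyOverX ?rpred1.
exists [seq z ^+ i | i <- index_iota 0 n].
  by rewrite big_map (factor_Xn_sub_1 prim_z) eqpxx.
apply/eqP; rewrite eqEsubv subvf -genL; apply/FadjoinP; split; first exact: subv_adjoin_seq.
apply: seqv_sub_adjoin; apply/mapP; exists (1 %% n)%N; last by rewrite prim_expr_mod.
by rewrite mem_index_iota ltn_pmod // (prim_order_gt0 prim_z).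
Qed.

(* Galois groups in mathcomp are only defined over a splittingFieldType. *)
Definition splitting_field_of (L : fieldExtType rat) (ax : splitting_field_axiom L) :
  splittingFieldType rat := HB.pack_for (splittingFieldType rat) L
    (FieldExt_isSplittingField.Build rat L ax).

Unset Implicit Arguments.

Theorem mainTheorem15 (p q k : nat) (pp : prime p) (pq : prime q) (hk : (1 <= k)%N)
    (L : fieldExtType rat) (z : L) (hz : (p ^ k)%N.-primitive_root z)
    (hL : <<1; z>>%VS = fullv) :
  (forall n : nat, (1 <= n)%N -> has_efficient_mu_grading L (q ^ n) ->
     (q ^ n = 2)%N \/ p = q) /\
  (p != 2%N ->
     (exists! V : {ffun mu 2 -> {vspace L}}, is_efficient_grading V) /\
     ~ has_efficient_mu_grading L (2 * p)).
Proof.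
pose E := splitting_field_of (cyclotomic_splitting_field_axiom hz hL).
have hzE : (p ^ k)%N.-primitive_root (z : E) by [].
have hLE : <<1; z : E>>%VS = fullv by [].
split=> [n n_gt0 grad_qn | p_neq2].
  have [->|q_neq_p] := eqVneq q p; [by right | left].
  exact: (mu_grading_cyclotomic pp hk hzE hLE pq n_gt0 q_neq_p grad_qn).
have p_odd : odd p by case: (even_prime pp) p_neq2 => ->.
have [s sz] := cyclotomic_conj_exists pp hk hzE hLE.
have ss1 := cyclotomic_conj_involution hzE hLE sz.
have s_neq1 := cyclotomic_conj_neq1 pp hk hzE sz p_odd.
split; last exact: (no_mu2p_grading_cyclotomic pp hk hzE hLE sz p_odd).
exists (gal_eigen_grading s); split=> [|W].
  exact: (gal_eigen_grading_efficient ss1 s_neq1).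
case/(@efficient_Zp2_grading_eigen E) => t [tt1 t_neq1 ->].
case: (cyclotomic_involution pp hk hzE hLE sz p_odd tt1) => [t1|-> //].
by rewrite t1 eqxx in t_neq1.
Qed.
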